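(* Let $\mathcal A\in Sp(2d,\mathbb R)$ be written in $d\times d$ blocks as $\mathcal A=(A_{ij})_{i,j=1}^4$. Then $$W_{\mathcal A}(\pi(z)f,\pi(z)g)=T_zW_{\mathcal A}(f,g)\qquad\text{for all } f,g\in\mathcal S(\mathbb R^d),\ z\in\mathbb R^{2d}$$ holds if and only if $$\mathcal A=\begin{pmatrix}A_{11}&I-A_{11}&A_{13}&A_{13}\\ A_{21}&-A_{21}&I-A_{11}^T&-A_{11}^T\\ 0&0&I&I\\ -I&I&0&0\end{pmatrix}$$ with $A_{13}=A_{13}^T$ and $A_{21}=A_{21}^T$ (here $I=I_{d\times d}$, $0=0_{d\times d}$). This does not depend on the choice of phase factor in $\mu(\mathcal A)$.
   Context: For $z=(z_1,z_2)\in\mathbb R^d\times\mathbb R^d$: $T_{z_1}f(t)=f(t-z_1)$, $M_{z_2}f(t)=e^{2\pi i z_2\cdot t}f(t)$, $\pi(z)=M_{z_2}T_{z_1}$; for $F$ on $\mathbb R^{2d}$, $T_zF(w)=F(w-z)$. $Sp(n,\mathbb R)=\{\mathcal A\in GL(2n,\mathbb R):\mathcal A^TJ\mathcal A=J\}$, $J=\begin{pmatrix}0&I_n\\-I_n&0\end{pmatrix}$. The metaplectic representation $\mu$ assigns to $\mathcal A\in Sp(n,\mathbb R)$ a unitary operator on $L^2(\mathbb R^n)$ (extending to $\mathcal S$ and $\mathcal S'$), defined up to a unimodular constant, normalized so that up to unimodular constants $\mu(J)$ is the Fourier transform, $\mu\begin{pmatrix}M^{-1}&0\\0&M^T\end{pmatrix}F(x)=|\det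 M|^{1/2}F(Mx)$, $\mu\begin{pmatrix}I&C\\0&I\end{pmatrix}F(x)=e^{i\pi Cx\cdot x}F(x)$ ($C$ symmetric). For $\mathcal A\in Sp(2d,\mathbb R)$, $W_{\mathcal A}(f,g)=\mu(\mathcal A)(f\otimes\bar g)$, $(f\otimes\bar g)(x,y)=f(x)\overline{g(y)}$. A matrix of the displayed form is called covariant. *)

From HB Require Import structures.
From mathcomp Require Import all_boot all_order all_algebra.
From mathcomp Require Import all_classical all_reals all_analysis.
From mathcomp Require Import complex.

Set Implicit Arguments.
Unset Strict Implicit.
Unset Printing Implicit Defensive.

Import Order.TTheory GRing.Theory Num.Theory.
Import numFieldNormedType.Exports.
Local Open Scope ring_scope.

Section TF.
Variable R : realType.

(* points of R^n are column vectors 'cV[R]_n; R^(n+n) = col_mx x xi *)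
Definition dotp (n : nat) (x y : 'cV[R]_n) : R := \sum_(i < n) x i 0 * y i 0.

Definition cis (t : R) : R[i] := Complex (cos t) (sin t).

Definition Tr (n : nat) (a : 'cV[R]_n) (F : 'cV[R]_n -> R[i]) : 'cV[R]_n -> R[i] :=
  fun t => F (t - a).

Definition Mod (n : nat) (b : 'cV[R]_n) (F : 'cV[R]_n -> R[i]) : 'cV[R]_n -> R[i] :=
  fun t => cis (2 * pi * dotp b t) * F t.

Definition tfshift (n : nat) (z : 'cV[R]_(n + n)) (F : 'cV[R]_n -> R[i]) :=
  Mod (dsubmx z) (Tr (usubmx z) F).

(* symmetric Schroedinger representation rho(z) = e^{-pi i z1.z2} pi(z) *)
Definition rho (n : nat) (z : 'cV[R]_(n + n)) (F : 'cV[R]_n -> R[i]) :=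
  fun t => cis (- pi * dotp (usubmx z) (dsubmx z)) * tfshift z F t.

Definition unitv (n : nat) (i : 'I_n) : 'cV[R]_n := delta_mx i 0.

Definition iterD (n : nat) (s : seq 'I_n) (g : 'cV[R]_n -> R) : 'cV[R]_n -> R :=
  foldr (fun i h => (fun x => 'D_(unitv i) h x)) g s.

Definition schwartz_real (n : nat) (g : 'cV[R]_n -> R) : Prop :=
  (forall (s : seq 'I_n) (i : 'I_n) (x : 'cV[R]_n),
      derivable (iterD s g) x (unitv i)) /\
  (forall (s : seq 'I_n) (k : nat), exists M : R, forall x : 'cV[R]_n,
      (1 + `|x|) ^+ k * `|iterD s g x| <= M).

Definition Schwartz (n : nat) (F : 'cV[R]_n -> R[i]) : Prop :=
  schwartz_real (fun x => complex.Re (F x)) /\ schwartz_real (fun x => complex.Im (F x)).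

Definition tens (d : nat) (f g : 'cV[R]_d -> R[i]) : 'cV[R]_(d + d) -> R[i] :=
  fun x => f (usubmx x) * conjc (g (dsubmx x)).

Definition Jmx (n : nat) : 'M[R]_(n + n) := block_mx 0 1%:M (- 1%:M) 0.

Definition symplectic (n : nat) (A : 'M[R]_(n + n)) : Prop :=
  A^T *m Jmx n *m A = Jmx n.

(* U is a metaplectic operator for A (i.e. U = mu(A) for some choice of the
   phase): U is a linear bijection of S(R^n) onto itself intertwining the
   Schroedinger representation: U rho(z) = rho(A z) U. *)
Definition metaplectic (n : nat) (A : 'M[R]_(n + n))
    (U : ('cV[R]_n -> R[i]) -> ('cV[R]_n -> R[i])) : Prop :=
  [/\ forall F G (a b : R[i]), Schwartz F -> Schwartz G ->
        U (fun t => a * F t + b * G t) = (fun t => a * U F t + b * U G t),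
      forall F, Schwartz F -> Schwartz (U F),
      forall F G, Schwartz F -> Schwartz G -> U F = U G -> F = G,
      forall G, Schwartz G -> exists2 F, Schwartz F & U F = G
    & forall (z : 'cV[R]_(n + n)) F, Schwartz F -> U (rho z F) = rho (A *m z) (U F)].

Definition covariant_form (d : nat) (A11 A13 A21 : 'M[R]_d)
  : 'M[R]_((d + d) + (d + d)) :=
  block_mx (block_mx A11 (1%:M - A11) A21 (- A21))
           (block_mx A13 A13 (1%:M - A11^T) (- A11^T))
           (block_mx 0 0 (- 1%:M) 1%:M)
           (block_mx 1%:M 1%:M 0 0).

End TF.

From Pilot Require Import Defs.
From HB Require Import structures.
From mathcomp Require Import all_boot all_order all_algebra.
From mathcomp Require Import all_classical all_reals all_analysis.
From mathcomp Require Import complex.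
From mathcomp Require Import ring lra.

(* Writing [tens f g] for f (x) conj g, one has
   tens (pi(z) f) (pi(z) g) = rho(w z) (tens f g) with w z = (z1, z1, z2, -z2),
   and T_z = rho(z, 0), where rho is the symmetric Schroedinger representation.
   Since U rho(w) = rho(A w) U, covariance says rho(A w z) F = rho(z, 0) F for
   F = U (tens f g).  For a nonzero Schwartz F the map p |-> rho(p) F is
   injective: |rho(p) F|^2 is |F|^2 translated by the first half of p, and a
   decaying function has no nonzero period; the second half then appears as a
   character e^{2 pi i b.t} that would have to be 1 near a point where F does
   not vanish.  Taking F nonzero (a Gaussian), covariance is thus equivalent to
   A (w z) = (z, 0) for all z.  This fixes A on two of its four block columns,
   and the symplectic relations form(A X, A Y) = form(X, Y) on block columns
   determine the rest up to two free symmetric blocks. *)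

Set Implicit Arguments.
Unset Strict Implicit.
Unset Printing Implicit Defensive.

Import Order.TTheory GRing.Theory Num.Theory.
Import numFieldNormedType.Exports.
Local Open Scope classical_set_scope.
Local Open Scope ring_scope.

(* Plain [iterD] would resolve to the ssrnat lemma about [iter]. *)
Local Notation iterD := Defs.iterD.

Section Phase.
Variable R : realType.

Lemma cis0 : cis (0 : R) = 1.
Proof. by rewrite /cis cos0 sin0. Qed.

Lemma cisD (a b : R) : cis (a + b) = cis a * cis b.
Proof.
rewrite /cis cosD sinD; apply/eqP; rewrite eq_complex /=.
by apply/andP; split; apply/eqP; ring.
Qed.

Lemma cis_mulN (a : R) : cis a * cis (- a) = 1.
Proof. by rewrite -cisD subrr cis0. Qed.

Lemma cisB_eq1 (a b : R) : cis a = cis b -> cis (a - b) = 1.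
Proof. by rewrite cisD => ->; rewrite cis_mulN. Qed.

Lemma conjc_cisM (a : R) (w : R[i]) : conjc (cis a * w) = cis (- a) * conjc w.
Proof.
case: w => u v; rewrite /cis cosN sinN; apply/eqP; rewrite eq_complex /=.
by apply/andP; split; apply/eqP; ring.
Qed.

Lemma sin_neq0 (x : R) : 0 < `|x| < pi -> sin x != 0.
Proof.
case: (ltrgtP x 0) => [xn|xp|->]; last by rewrite normr0 ltxx.
- rewrite ltr0_norm // => /andP[_ xpi]; rewrite -(opprK x) sinN oppr_eq0.
  by rewrite gt_eqF // sin_gt0_pi // oppr_gt0 xn.
- by rewrite gtr0_norm // => /andP[_ xpi]; rewrite gt_eqF // sin_gt0_pi // xp.
Qed.

Lemma cis_eq1_near0 (c e : R) :
  0 < e -> (forall h, 0 < h < e -> cis (h * c) = 1) -> c = 0.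
Proof.
move=> e0 Hc; apply/eqP; apply: contraT => c0.
have P0 : 0 <= e * `|c| by rewrite mulr_ge0 // ltW.
pose h := e / (2 + 2 * (e * `|c|)).
have den0 : 0 < 2 + 2 * (e * `|c|) by lra.
have h0 : 0 < h by rewrite divr_gt0.
have he : h < e by rewrite ltr_pdivrMr // -{1}[e]mulr1 ltr_pM2l //; lra.
have hc : h * `|c| < 1 by rewrite mulrAC ltr_pdivrMr //; lra.
have hc1 : cis (h * c) = 1 by apply: Hc; rewrite h0 he.
have : sin (h * c) != 0.
  apply: sin_neq0; rewrite normrM gtr0_norm // mulr_gt0 ?normr_gt0 //=.
  by apply: lt_le_trans hc _; apply: le_trans (pi_ge2 R); lra.
by case: hc1 => _ ->; rewrite eqxx.
Qed.

End Phase.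

Section DotProduct.
Variables (R : realType) (n : nat).
Implicit Types x y z : 'cV[R]_n.

Lemma dotpC x y : dotp x y = dotp y x.
Proof. by apply: eq_bigr => i _; rewrite mulrC. Qed.

Lemma dotp0r x : dotp x 0 = 0.
Proof. by rewrite /dotp big1 // => i _; rewrite mxE mulr0. Qed.

Lemma dotp0l x : dotp 0 x = 0.
Proof. by rewrite dotpC dotp0r. Qed.

Lemma dotpDr x y z : dotp x (y + z) = dotp x y + dotp x z.
Proof. by rewrite /dotp -big_split; apply: eq_bigr => i _; rewrite mxE mulrDr. Qed.

Lemma dotpDl x y z : dotp (x + y) z = dotp x z + dotp y z.
Proof. by rewrite dotpC dotpDr !(dotpC z). Qed.

Lemma dotpZr (a : R) x y : dotp x (a *: y) = a * dotp x y.
Proof. by rewrite /dotp mulr_sumr; apply: eq_bigr => i _; rewrite mxE mulrCA. Qed.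

Lemma dotpZl (a : R) x y : dotp (a *: x) y = a * dotp x y.
Proof. by rewrite dotpC dotpZr dotpC. Qed.

Lemma dotpNr x y : dotp x (- y) = - dotp x y.
Proof. by rewrite -scaleN1r dotpZr mulN1r. Qed.

Lemma dotpNl x y : dotp (- x) y = - dotp x y.
Proof. by rewrite dotpC dotpNr dotpC. Qed.

Lemma dotp_unitv (i : 'I_n) x : dotp (unitv R i) x = x i 0.
Proof.
rewrite /dotp (bigD1 i) //= big1 ?addr0 => [|j ji]; first by rewrite mxE eqxx mul1r.
by rewrite mxE (negbTE ji) mul0r.
Qed.

Lemma dotp_col_mx m (a : 'cV[R]_n) (b : 'cV[R]_m) (x : 'cV[R]_(n + m)) :
  dotp (col_mx a b) x = dotp a (usubmx x) + dotp b (dsubmx x).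
Proof.
rewrite /dotp big_split_ord /=; congr (_ + _); apply: eq_bigr => i _;
  by rewrite ?col_mxEu ?col_mxEd !mxE.
Qed.

End DotProduct.

Section Schroedinger.
Variable R : realType.

Lemma rho_col_mx n (a b : 'cV[R]_n) (G : 'cV[R]_n -> R[i]) t :
  rho (col_mx a b) G t = cis (2 * pi * dotp b t - pi * dotp a b) * G (t - a).
Proof.
rewrite /rho /tfshift /Mod /Tr col_mxKu col_mxKd mulrA -cisD.
by congr (cis _ * _); ring.
Qed.

Lemma Tr_rho n (z : 'cV[R]_n) (G : 'cV[R]_n -> R[i]) : Tr z G = rho (col_mx z 0) G.
Proof.
by apply: funext => t; rewrite rho_col_mx dotp0l dotp0r !mulr0 subrr cis0 mul1r.
Qed.

Definition tens_point d (z : 'cV[R]_(d + d)) : 'cV[R]_((d + d) + (d + d)) :=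
  col_mx (col_mx (usubmx z) (usubmx z)) (col_mx (dsubmx z) (- dsubmx z)).

Lemma tens_tfshift d (f g : 'cV[R]_d -> R[i]) (z : 'cV[R]_(d + d)) :
  tens (tfshift z f) (tfshift z g) = rho (tens_point z) (tens f g).
Proof.
apply: funext => x; rewrite rho_col_mx /tens /tfshift /Mod /Tr.
rewrite !dotp_col_mx !col_mxKu !col_mxKd dotpNr !dotpNl subrr mulr0 subr0.
rewrite !linearB /= !col_mxKu !col_mxKd conjc_cisM mulrBr -mulrN cisD; ring.
Qed.

End Schroedinger.

Section SymplecticForm.
Variable R : realType.

Definition form n m (X Y : 'M[R]_(n + n, m)) := X^T *m Jmx R n *m Y.

Lemma formE n m (X1 Y1 X2 Y2 : 'M[R]_(n, m)) :
  form (col_mx X1 Y1) (col_mx X2 Y2) = X1^T *m Y2 - Y1^T *m X2.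
Proof.
rewrite /form /Jmx tr_col_mx mul_row_block !mulmx0 !mulmx1 add0r addr0.
by rewrite mul_row_col mulmxN mulmx1 mulNmx addrC.
Qed.

Lemma form_symplectic n m (A : 'M[R]_(n + n)) (X Y : 'M[R]_(n + n, m)) :
  symplectic A -> form (A *m X) (A *m Y) = form X Y.
Proof. by move=> SA; rewrite /form trmx_mul -!mulmxA (mulmxA A^T) (mulmxA _ A) SA. Qed.

Lemma mulmx_cV_eq n m (M N : 'M[R]_(n, m)) :
  (forall u : 'cV[R]_m, M *m u = N *m u) -> M = N.
Proof.
move=> MN; apply/matrixP => i j.
by have /matrixP/(_ i 0) := MN (delta_mx j 0); rewrite -!colE !mxE.
Qed.

Lemma trmxN_eq m n (x : 'M[R]_(m, n)) (y : 'M[R]_(n, m)) : - x^T = y -> x = - y^T.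
Proof. by move=> <-; rewrite linearN /= trmxK opprK. Qed.

End SymplecticForm.

Section CovariantForm.
Variables (R : realType) (d : nat).

Local Notation col4 a b c e := (col_mx (col_mx a b) (col_mx c e)).
Local Notation e1 := (col4 1%:M 0 0 0 : 'M[R]_((d + d) + (d + d), d)).
Local Notation e2 := (col4 0 1%:M 0 0 : 'M[R]_((d + d) + (d + d), d)).
Local Notation e3 := (col4 0 0 1%:M 0 : 'M[R]_((d + d) + (d + d), d)).
Local Notation e4 := (col4 0 0 0 1%:M : 'M[R]_((d + d) + (d + d), d)).

Lemma form4E (x1 x2 x3 x4 y1 y2 y3 y4 : 'M[R]_d) :
  form (col4 x1 x2 x3 x4) (col4 y1 y2 y3 y4) =
  x1^T *m y3 + x2^T *m y4 - (x3^T *m y1 + x4^T *m y2).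
Proof. by rewrite formE !tr_col_mx !mul_row_col. Qed.

Lemma col4_exists (X : 'M[R]_((d + d) + (d + d), d)) :
  exists x1 x2 x3 x4, X = col4 x1 x2 x3 x4.
Proof.
by exists (usubmx (usubmx X)), (dsubmx (usubmx X)), (usubmx (dsubmx X)),
  (dsubmx (dsubmx X)); rewrite !vsubmxK.
Qed.

Lemma row4_e (A : 'M[R]_((d + d) + (d + d))) :
  A = row_mx (row_mx (A *m e1) (A *m e2)) (row_mx (A *m e3) (A *m e4)).
Proof.
rewrite -!mul_mx_row -[LHS]mulmx1; congr (_ *m _).
by rewrite !col_mx0 -!block_mxEh row_mx0 -!scalar_mx_block.
Qed.

Lemma covariant_form_tens_point (A11 A13 A21 : 'M[R]_d) (z : 'cV[R]_(d + d)) :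
  covariant_form A11 A13 A21 *m tens_point z = col_mx z 0.
Proof.
rewrite /covariant_form /tens_point !mul_block_col -[z in RHS]vsubmxK -col_mx0.
rewrite !(mulmxN, mul0mx, mul1mx, mulmxBl, mulNmx) !add_col_mx.
congr (col_mx (col_mx _ _) (col_mx _ _)).
- by rewrite subrr addr0 addrC subrK.
- by rewrite subrr add0r opprK subrK.
- by rewrite !(subrr, addr0).
- by rewrite !(addNr, addr0).
Qed.

Lemma fix_tens_point_cols (A : 'M[R]_((d + d) + (d + d))) :
  (forall z, A *m tens_point z = col_mx z 0) ->
  A *m (e1 + e2) = e1 /\ A *m (e3 - e4) = e2.
Proof.
move=> Afix; split; apply: mulmx_cV_eq => u; rewrite -mulmxA.
- have := Afix (col_mx u 0); rewrite /tens_point col_mxKu col_mxKd.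
  by rewrite !(add_col_mx, mul_col_mx, mul1mx, mul0mx, addr0, add0r, oppr0) !col_mx0 => ->.
- have := Afix (col_mx 0 u); rewrite /tens_point col_mxKu col_mxKd.
  by rewrite !(opp_col_mx, add_col_mx, mul_col_mx, mul1mx, mul0mx, addr0, add0r,
    oppr0, subr0, sub0r, mulNmx) !col_mx0 => ->.
Qed.

Lemma covariant_form_of_fix (A : 'M[R]_((d + d) + (d + d))) :
  symplectic A -> (forall z, A *m tens_point z = col_mx z 0) ->
  exists A11 A13 A21 : 'M[R]_d,
    [/\ A13^T = A13, A21^T = A21 & A = covariant_form A11 A13 A21].
Proof.
move=> SA /fix_tens_point_cols [A12 A34].
(* The pairs (e1, e3 - e4), (e1, e1 + e2), (e3, e3 - e4), (e3, e1 + e2) fix the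
   last two blocks of A e1 and A e3; the pairs (e1, e1), (e3, e3), (e1, e3) make
   the second block of A e1 and the first block of A e3 symmetric and determine
   the second block of A e3. *)
have Ae2 : A *m e2 = e1 - A *m e1 by rewrite -{1}A12 mulmxDr addrAC subrr add0r.
have Ae4 : A *m e4 = A *m e3 - e2 by rewrite -A34 mulmxBr opprB addrC subrK.
have F1 := form_symplectic e1 (e3 - e4) SA.
have F2 := form_symplectic e1 (e1 + e2) SA.
have F3 := form_symplectic e3 (e3 - e4) SA.
have F4 := form_symplectic e3 (e1 + e2) SA.
have F5 := form_symplectic e1 e1 SA.
have F6 := form_symplectic e3 e3 SA.
have F7 := form_symplectic e1 e3 SA.
rewrite A12 A34 in F1 F2 F3 F4.
have [a1 [a2 [a3 [a4 Ae1]]]] := col4_exists (A *m e1).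
have [c1 [c2 [c3 [c4 Ae3]]]] := col4_exists (A *m e3).
rewrite (row4_e A) Ae2 Ae4 Ae1 Ae3.
rewrite Ae1 Ae3 in F1 F2 F3 F4 F5 F6 F7.
move: F1 F2 F3 F4 F5 F6 F7.
rewrite !(opp_col_mx, add_col_mx) !form4E.
rewrite !(trmx1, trmx0, mul1mx, mulmx1, mul0mx, mulmx0, addr0, add0r, subr0, sub0r, oppr0).
move=> /trmxN_eq a4E /trmxN_eq a3E /trmxN_eq c4E /trmxN_eq c3E.
rewrite {}a4E {}a3E {}c4E {}c3E opprK !(trmx1, trmx0, oppr0, linearN) /=.
rewrite !(trmx1, trmx0, mul1mx, mulmx1, mul0mx, mulmx0, mulmxN, mulNmx).
rewrite !(oppr0, opprK, addr0, add0r, subr0, sub0r).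
move=> /eqP; rewrite addrC subr_eq0 eq_sym => /eqP a2S.
move=> /eqP; rewrite subr_eq0 => /eqP c1S.
move=> /(canRL (addKr _)) c2E.
exists a1, c1, a2; split=> //; rewrite c2E /covariant_form.
rewrite !block_mxEh -!block_mxEv !block_mxEh.
by rewrite addrK [- a1^T + _]addrC.
Qed.

Lemma covariant_formP (A : 'M[R]_((d + d) + (d + d))) : symplectic A ->
  (forall z, A *m tens_point z = col_mx z 0) <->
  exists A11 A13 A21 : 'M[R]_d,
    [/\ A13^T = A13, A21^T = A21 & A = covariant_form A11 A13 A21].
Proof.
move=> SA; split; first exact: covariant_form_of_fix.
by case=> [A11 [A13 [A21 [_ _ ->]]]] z; apply: covariant_form_tens_point.
Qed.

End CovariantForm.

Section LineDerivative.
Variable R : realType.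

Lemma derive_line_transfer (V W : normedModType R) (f : V -> R) (g : W -> R)
    (x v : V) (y w : W) :
  (forall h : R, f (h *: v + x) = g (h *: w + y)) ->
  (derivable f x v <-> derivable g y w) /\ 'D_v f x = 'D_w g y.
Proof.
move=> fg; have fgxy : f x = g y by have := fg 0; rewrite !scale0r !add0r.
have quotientE : (fun h : R => h^-1 *: ((f \o shift x) (h *: v) - f x)) =
                 (fun h : R => h^-1 *: ((g \o shift y) (h *: w) - g y)).
  by apply: funext => h /=; rewrite fg fgxy.
by rewrite /derivable /derive quotientE.
Qed.

Lemma derive_affine_line (V : normedModType R) (f : V -> R) (x v : V) (c : R) :
  (forall h : R, f (h *: v + x) = f x + h * c) ->
  derivable f x v /\ 'D_v f x = c.
Proof.
move=> fc.
have quotient_c : \forall h \near 0^',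
    (fun h : R => h^-1 *: ((f \o shift x) (h *: v) - f x)) h = c.
  near=> h => /=; rewrite fc addrC addKr /GRing.scale /= mulrA mulVf ?mul1r //.
  by near: h; exact: nbhs_dnbhs_neq.
by split; [exact: (is_cvg_near_cst c) | exact: lim_near_cst].
Unshelve. all: by end_near.
Qed.

End LineDerivative.

Section MatrixNorm.
Variable R : realType.

Lemma mx_norm_entry m n (M : 'M[R]_(m, n)) i j : `|M i j| <= `|M|.
Proof.
change (`|M i j| <= mx_norm M); rewrite mx_normrE; apply/bigmax_geP; right => /=.
by exists (i, j).
Qed.

Lemma mx_norm_le m n (M : 'M[R]_(m, n)) c :
  0 <= c -> (forall i j, `|M i j| <= c) -> `|M| <= c.
Proof.
move=> c0 Mc; change (mx_norm M <= c); rewrite mx_normrE.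
by apply: bigmax_le => // ij _; apply: Mc.
Qed.

End MatrixNorm.

Section SeparableProduct.
Variables (R : realType) (d : nat).
Implicit Types (a b : 'cV[R]_d -> R) (x v : 'cV[R]_(d + d)).

Definition sepprod a b : 'cV[R]_(d + d) -> R := fun x => a (usubmx x) * b (dsubmx x).

Definition lpart (s : seq 'I_(d + d)) : seq 'I_d :=
  pmap (fun i => if fintype.split i is inl j then Some j else None) s.

Definition rpart (s : seq 'I_(d + d)) : seq 'I_d :=
  pmap (fun i => if fintype.split i is inr j then Some j else None) s.

Definition all_partials_derivable n (a : 'cV[R]_n -> R) :=
  forall (s : seq 'I_n) (i : 'I_n) (x : 'cV[R]_n), derivable (iterD s a) x (unitv R i).

Lemma usubmx_unitv_lshift (j : 'I_d) : usubmx (unitv R (lshift d j)) = unitv R j.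
Proof. by apply/matrixP => k l; rewrite !mxE (inj_eq (@lshift_inj _ _)). Qed.

Lemma dsubmx_unitv_lshift (j : 'I_d) : dsubmx (unitv R (lshift d j)) = 0.
Proof. by apply/matrixP => k l; rewrite !mxE eq_rlshift. Qed.

Lemma usubmx_unitv_rshift (j : 'I_d) : usubmx (unitv R (rshift d j)) = 0.
Proof. by apply/matrixP => k l; rewrite !mxE eq_lrshift. Qed.

Lemma dsubmx_unitv_rshift (j : 'I_d) : dsubmx (unitv R (rshift d j)) = unitv R j.
Proof. by apply/matrixP => k l; rewrite !mxE (inj_eq (@rshift_inj _ _)). Qed.

Lemma derive_usubmx a x v :
  (derivable (a \o usubmx) x v <-> derivable a (usubmx x) (usubmx v)) /\
  'D_v (a \o usubmx) x = 'D_(usubmx v) a (usubmx x).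
Proof. by apply: derive_line_transfer => h /=; rewrite linearD linearZ. Qed.

Lemma derive_dsubmx a x v :
  (derivable (a \o dsubmx) x v <-> derivable a (dsubmx x) (dsubmx v)) /\
  'D_v (a \o dsubmx) x = 'D_(dsubmx v) a (dsubmx x).
Proof. by apply: derive_line_transfer => h /=; rewrite linearD linearZ. Qed.

Lemma derive_sepprod a b x (i : 'I_(d + d)) :
  (forall j y, derivable a y (unitv R j)) -> (forall j y, derivable b y (unitv R j)) ->
  derivable (sepprod a b) x (unitv R i) /\
  'D_(unitv R i) (sepprod a b) x =
    match fintype.split i with
    | inl j => 'D_(unitv R j) a (usubmx x) * b (dsubmx x)
    | inr j => a (usubmx x) * 'D_(unitv R j) b (dsubmx x)
    end.
Proof.
move=> da db; have -> : sepprod a b = (a \o usubmx) * (b \o dsubmx) by [].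
rewrite -(splitK i); case: (fintype.split i) => j /=.
- have [[_ dau] Dau] := derive_usubmx a x (unitv R (lshift d j)).
  have [[_ dbd] Dbd] := derive_dsubmx b x (unitv R (lshift d j)).
  rewrite usubmx_unitv_lshift dsubmx_unitv_lshift in dau Dau dbd Dbd.
  have da' := dau (da _ _); have db' := dbd (@derivable0 _ _ _ b (dsubmx x)).
  split; first exact: derivableM.
  rewrite deriveM // Dau Dbd derive0 scaler0 add0r (unsplitK (inl _ j)).
  by rewrite /GRing.scale /= mulrC.
- have [[_ dau] Dau] := derive_usubmx a x (unitv R (rshift d j)).
  have [[_ dbd] Dbd] := derive_dsubmx b x (unitv R (rshift d j)).
  rewrite usubmx_unitv_rshift dsubmx_unitv_rshift in dau Dau dbd Dbd.
  have da' := dau (@derivable0 _ _ _ a (usubmx x)); have db' := dbd (db _ _).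
  split; first exact: derivableM.
  by rewrite deriveM // Dau Dbd derive0 scaler0 addr0 (unsplitK (inr _ j)).
Qed.

Lemma iterD_sepprod a b : all_partials_derivable a -> all_partials_derivable b ->
  forall s, iterD s (sepprod a b) =
            sepprod (iterD (lpart s) a) (iterD (rpart s) b).
Proof.
move=> da db; elim=> [//|i s IH] /=; rewrite IH; apply: funext => x.
have [_ ->] := derive_sepprod x i (da (lpart s)) (db (rpart s)).
by rewrite /lpart /rpart /=; case: (fintype.split i).
Qed.

Lemma mx_norm_col_split x : `|x| <= `|usubmx x| + `|dsubmx x|.
Proof.
apply: mx_norm_le; first by rewrite addr_ge0.
move=> i j; rewrite -(splitK i); case: (fintype.split i) => k /=.
- have -> : x (lshift d k) j = usubmx x k j by rewrite mxE.
  by apply: le_trans (mx_norm_entry _ _ _) _; rewrite lerDl.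
- have -> : x (rshift d k) j = dsubmx x k j by rewrite mxE.
  by apply: le_trans (mx_norm_entry _ _ _) _; rewrite lerDr.
Qed.

Lemma weight_col_split x :
  1 + `|x| <= (1 + `|usubmx x|) * (1 + `|dsubmx x|).
Proof.
apply: le_trans (lerD (lexx 1) (mx_norm_col_split x)) _.
have := mulr_ge0 (normr_ge0 (usubmx x)) (normr_ge0 (dsubmx x)).
by set p := `|usubmx x|; set q := `|dsubmx x|; nra.
Qed.

Lemma schwartz_real_sepprod a b :
  schwartz_real a -> schwartz_real b -> schwartz_real (sepprod a b).
Proof.
move=> [da ba] [db bb]; split=> s; rewrite (iterD_sepprod da db).
  by move=> i x; have [] := derive_sepprod x i (da (lpart s)) (db (rpart s)).
move=> k; have [Ma HMa] := ba (lpart s) k; have [Mb HMb] := bb (rpart s) k.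
exists (Ma * Mb) => x; rewrite /sepprod.
set A := iterD _ a; set B := iterD _ b.
have w0 (y : 'cV[R]_d) : 0 <= (1 + `|y|) ^+ k by rewrite exprn_ge0 // addr_ge0.
apply: le_trans (_ : ((1 + `|usubmx x|) ^+ k * `|A (usubmx x)|) *
                     ((1 + `|dsubmx x|) ^+ k * `|B (dsubmx x)|) <= _); last first.
  by apply: ler_pM; rewrite ?mulr_ge0.
rewrite normrM mulrACA -exprMn; apply: ler_wpM2r; first by rewrite mulr_ge0.
by apply: lerXn2r; rewrite ?nnegrE ?mulr_ge0 ?addr_ge0 // weight_col_split.
Qed.

End SeparableProduct.

Section SchwartzClosure.
Variables (R : realType) (n : nat).
Implicit Types a b : 'cV[R]_n -> R.

Lemma iterD_cst0 (s : seq 'I_n) : iterD s (fun _ : 'cV[R]_n => 0 : R) = (fun _ => 0).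
Proof.
elim: s => [//|i s IH] /=; rewrite IH; apply: funext => x.
exact: (derive_cst (0 : R)).
Qed.

Lemma schwartz_real0 : schwartz_real (fun _ : 'cV[R]_n => 0 : R).
Proof.
split=> [s i x|s k]; rewrite iterD_cst0; first exact: (derivable_cst (0 : R)).
by exists 0 => x; rewrite normr0 mulr0.
Qed.

Lemma schwartz_realD a b :
  schwartz_real a -> schwartz_real b -> schwartz_real (a + b).
Proof.
move=> [da ba] [db bb].
have iterDD s : iterD s (a + b) = iterD s a + iterD s b.
  by elim: s => [//|i s IH] /=; rewrite IH; apply: funext => x; rewrite deriveD.
split=> [s i x|s k]; rewrite iterDD; first exact: derivableD.
have [Ma HMa] := ba s k; have [Mb HMb] := bb s k.
exists (Ma + Mb) => x; apply: le_trans (ler_wpM2l _ (ler_normD _ _)) _.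
  by rewrite exprn_ge0 // addr_ge0.
by rewrite mulrDr; apply: lerD.
Qed.

Lemma schwartz_realN a : schwartz_real a -> schwartz_real (- a).
Proof.
move=> [da ba].
have iterDN s : iterD s (- a) = - iterD s a.
  by elim: s => [//|i s IH] /=; rewrite IH; apply: funext => x; rewrite deriveN.
split=> [s i x|s k]; rewrite iterDN; first exact: derivableN.
by have [Ma HMa] := ba s k; exists Ma => x; rewrite /= normrN.
Qed.

End SchwartzClosure.

Lemma Schwartz_tens (R : realType) d (f g : 'cV[R]_d -> R[i]) :
  Schwartz f -> Schwartz g -> Schwartz (tens f g).
Proof.
move=> [rf imf] [rg img]; split.
- have -> : (fun x => complex.Re (tens f g x)) =
    sepprod (fun y => complex.Re (f y)) (fun y => complex.Re (g y)) +
    sepprod (fun y => complex.Im (f y)) (fun y => complex.Im (g y)).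
    apply: funext => x; rewrite /tens /sepprod !fctE.
    by case: (f (usubmx x)) => a1 a2; case: (g (dsubmx x)) => b1 b2 /=; ring.
  by apply: schwartz_realD; apply: schwartz_real_sepprod.
- have -> : (fun x => complex.Im (tens f g x)) =
    sepprod (fun y => complex.Im (f y)) (fun y => complex.Re (g y)) -
    sepprod (fun y => complex.Re (f y)) (fun y => complex.Im (g y)).
    apply: funext => x; rewrite /tens /sepprod !fctE.
    by case: (f (usubmx x)) => a1 a2; case: (g (dsubmx x)) => b1 b2 /=; ring.
  by apply: schwartz_realD; [|apply: schwartz_realN]; apply: schwartz_real_sepprod.
Qed.

Section PolynomialFunctions.
Variables (R : realType) (n : nat).

Inductive polyfun : ('cV[R]_n -> R) -> Prop :=
| polyfun_cst c : polyfun (fun _ => c)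
| polyfun_coord i : polyfun (fun x => x i 0)
| polyfun_add p q : polyfun p -> polyfun q -> polyfun (fun x => p x + q x)
| polyfun_mul p q : polyfun p -> polyfun q -> polyfun (fun x => p x * q x).

Lemma derive_polyfun p : polyfun p -> forall i,
  (forall x, derivable p x (unitv R i)) /\
  exists2 q, polyfun q & forall x, 'D_(unitv R i) p x = q x.
Proof.
elim=> [c|j|p1 q1 _ IH1 _ IH2|p1 q1 Pp1 IH1 Pq1 IH2] i.
- split=> [x|]; first exact: (derivable_cst c).
  by exists (fun _ => 0); [exact: polyfun_cst | move=> x; exact: (derive_cst c)].
- have coord x : derivable (fun y : 'cV[R]_n => y j 0) x (unitv R i) /\
      'D_(unitv R i) (fun y : 'cV[R]_n => y j 0) x = (j == i)%:R.
    by apply: derive_affine_line => h; rewrite !mxE eqxx andbT addrC.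
  split=> [x|]; first by case: (coord x).
  by exists (fun _ => (j == i)%:R); [exact: polyfun_cst | move=> x; case: (coord x)].
- have [d1 [r1 P1 E1]] := IH1 i; have [d2 [r2 P2 E2]] := IH2 i.
  split=> [x|]; first exact: (derivableD (d1 x) (d2 x)).
  exists (fun x => r1 x + r2 x); first exact: polyfun_add.
  by move=> x; rewrite (deriveD (d1 x) (d2 x)) E1 E2.
- have [d1 [r1 Pr1 E1]] := IH1 i; have [d2 [r2 Pr2 E2]] := IH2 i.
  split=> [x|]; first exact: (derivableM (d1 x) (d2 x)).
  exists (fun x => p1 x * r2 x + q1 x * r1 x); first by apply: polyfun_add; apply: polyfun_mul.
  by move=> x; rewrite (deriveM (d1 x) (d2 x)) E1 E2.
Qed.

Lemma polyfun_bound p : polyfun p ->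
  exists C N, 0 <= C /\ forall x : 'cV[R]_n, `|p x| <= C * (1 + `|x|) ^+ N.
Proof.
have w1 (x : 'cV[R]_n) : 1 <= 1 + `|x| by rewrite lerDl.
elim=> [c|i|p1 q1 _ [C1 [N1 [C10 H1]]] _ [C2 [N2 [C20 H2]]]
          |p1 q1 _ [C1 [N1 [C10 H1]]] _ [C2 [N2 [C20 H2]]]].
- by exists `|c|, 0%N; split => // x; rewrite expr0 mulr1.
- exists 1, 1%N; split => // x; rewrite expr1 mul1r.
  by apply: le_trans (mx_norm_entry _ _ _) _; rewrite lerDr.
- exists (C1 + C2), (N1 + N2)%N; split=> [|x]; first by rewrite addr_ge0.
  apply: le_trans (ler_normD _ _) _; rewrite mulrDl.
  apply: lerD; [apply: le_trans (H1 x) _ | apply: le_trans (H2 x) _];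
    by apply: ler_wpM2l => //; apply: ler_weXn2l; rewrite ?w1 ?leq_addr ?leq_addl.
- exists (C1 * C2), (N1 + N2)%N; split=> [|x]; first by rewrite mulr_ge0.
  by rewrite normrM exprD mulrACA; apply: ler_pM.
Qed.

End PolynomialFunctions.

Section Gaussian.
Variable R : realType.

Definition gauss n (x : 'cV[R]_n) : R := expR (- dotp x x).

Lemma derive_gauss n (i : 'I_n) (x : 'cV[R]_n) :
  derivable (@gauss n) x (unitv R i) /\
  'D_(unitv R i) (@gauss n) x = - (2 * x i 0) * gauss x.
Proof.
set a := x i 0.
(* [g h] is [gauss (h *: unitv R i + x)] in a form [is_derive_eq] differentiates. *)
pose g := cst (gauss x) * (expR \o (- ((2 * a) \*: id + id * id))).
have g' : is_derive (0 : R) 1 g (- (2 * a) * gauss x).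
  apply: is_derive_eq.
  rewrite /cst /= !fctE /= !(scaler0, scale0r, mulr0, addr0, oppr0, expR0, mul1r, add0r).
  by rewrite /GRing.scale /= mulr1 mulrC.
have gaussE (h : R) : gauss (h *: unitv R i + x) = g (h *: 1 + 0).
  rewrite /g /gauss /= !fctE /= addr0 /GRing.scale /= mulr1 -expRD; congr expR.
  rewrite !(dotpDr, dotpDl, dotpZl, dotpZr) dotp_unitv (dotpC x) dotp_unitv.
  by rewrite !mxE eqxx /= -/a; ring.
have [[_ dg] Dg] := derive_line_transfer gaussE.
by split; [exact: dg | rewrite Dg derive_val].
Qed.

Lemma iterD_gauss n (s : seq 'I_n) :
  (forall i x, derivable (iterD s (@gauss n)) x (unitv R i)) /\
  exists2 p, polyfun p & iterD s (@gauss n) = (fun x => p x * gauss x).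
Proof.
have derive_pgauss p : polyfun p -> forall i, exists2 q, polyfun q & forall x,
    derivable (fun x => p x * @gauss n x) x (unitv R i) /\
    'D_(unitv R i) (fun x => p x * @gauss n x) x = q x * gauss x.
  move=> Pp i; have [dp [q Pq Eq]] := derive_polyfun Pp i.
  exists (fun x => q x + (-2 * x i 0) * p x).
    by apply: polyfun_add => //; do 2?apply: polyfun_mul => //; constructor.
  move=> x; have [dg Dg] := derive_gauss i x.
  split; first exact: (derivableM (dp x) dg).
  by rewrite (deriveM (dp x) dg) Dg Eq /GRing.scale /=; ring.
elim: s => [|i s [_ [p Pp Ep]]] /=.
  split=> [i x|]; first by case: (derive_gauss i x).
  by exists (fun _ => 1); [constructor | apply: funext => x; rewrite mul1r].
rewrite Ep; have [q Pq Dq] := derive_pgauss p Pp i.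
have -> : (fun x => 'D_(unitv R i) (fun y => p y * gauss y) x) = (fun x => q x * gauss x).
  by apply: funext => x; case: (Dq x).
split=> [j x|]; last by exists q.
by have [r _ Dr] := derive_pgauss q Pq j; case: (Dr x).
Qed.

Lemma exprn_le_fact_expR m (y : R) : 0 <= y -> y ^+ m <= m`!%:R * expR y.
Proof.
move=> y0; case: m => [|m]; first by rewrite expr0 fact0 mul1r -expR0 ler_expR.
have fact_pos : 0 < m.+1`!%:R :> R by rewrite ltr0n fact_gt0.
have := expR_ge1Dxn m y0; rewrite -(ler_pM2l fact_pos); apply: le_trans.
by rewrite mulrDr mulr1 mulrCA mulfV ?gt_eqF // mulr1 lerDr ler0n.
Qed.

Lemma weight_gauss_bounded m : exists K, forall r : R, 0 <= r ->
  (1 + r) ^+ m * expR (- r ^+ 2) <= K.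
Proof.
exists (2 ^+ m * m`!%:R) => r r0.
have e0 : 0 <= expR (- r ^+ 2) := expR_ge0 _.
have f1 : 1 <= m`!%:R :> R by rewrite ler1n fact_gt0.
case: (lerP r 1) => r1.
- apply: le_trans (_ : 2 ^+ m * 1 <= _); last by rewrite ler_wpM2l // exprn_ge0.
  apply: ler_pM; rewrite ?exprn_ge0 ?addr_ge0 //.
    by apply: lerXn2r; rewrite ?nnegrE ?addr_ge0 //; lra.
  by rewrite expR_le1 oppr_le0 sqr_ge0.
- have h1 : (1 + r) ^+ m <= 2 ^+ m * (r ^+ 2) ^+ m.
    rewrite -exprMn; apply: lerXn2r; rewrite ?nnegrE ?addr_ge0 ?mulr_ge0 ?sqr_ge0 //.
    by nra.
  apply: le_trans (ler_wpM2r e0 h1) _; rewrite -mulrA ler_wpM2l ?exprn_ge0 //.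
  have := ler_wpM2r e0 (exprn_le_fact_expR m (sqr_ge0 r)).
  by rewrite -mulrA expRxMexpNx_1 mulr1.
Qed.

Lemma gauss_le_expR_norm n (x : 'cV[R]_n) : gauss x <= expR (- `|x| ^+ 2).
Proof.
rewrite /gauss ler_expR lerN2.
have sqr_sum_ge0 (P : pred 'I_n) : 0 <= \sum_(i | P i) x i 0 * x i 0.
  by apply: sumr_ge0 => i _; rewrite -expr2 sqr_ge0.
case: (eqVneq (mx_norm x) 0) => [x0|/mx_norm_neq0 [[k l] /= xkl]].
  have -> : `|x| = 0 by exact: x0.
  by rewrite expr0n; apply: sqr_sum_ge0.
have -> : `|x| = `|x k l| by exact: xkl.
by rewrite (ord1 l) real_normK ?num_real // /dotp (bigD1 k) //= expr2 lerDl.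
Qed.

Lemma schwartz_real_gauss n : schwartz_real (@gauss n).
Proof.
split=> s; first by have [] := iterD_gauss s.
move=> k; have [_ [p Pp ->]] := iterD_gauss s.
have [C [N [C0 HC]]] := polyfun_bound Pp.
have [K HK] := weight_gauss_bounded (k + N).
exists (C * K) => x.
have g0 : 0 <= gauss x by exact: expR_ge0.
have w0 : 0 <= 1 + `|x| by rewrite addr_ge0.
rewrite normrM (ger0_norm g0).
apply: le_trans (_ : (1 + `|x|) ^+ k * (C * (1 + `|x|) ^+ N) * gauss x <= _).
  by rewrite mulrA ler_wpM2r // ler_wpM2l ?exprn_ge0.
rewrite mulrCA -exprD -mulrA ler_wpM2l //; apply: le_trans (HK _ (normr_ge0 x)).
by rewrite ler_wpM2l ?exprn_ge0 ?gauss_le_expR_norm.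
Qed.

Definition gaussC n (x : 'cV[R]_n) : R[i] := Complex (gauss x) 0.

Lemma Schwartz_gaussC n : Schwartz (@gaussC n).
Proof. by split; [exact: schwartz_real_gauss | exact: schwartz_real0]. Qed.

Lemma tens_gaussC_neq0 d (x : 'cV[R]_(d + d)) : tens (@gaussC d) (@gaussC d) x != 0.
Proof.
apply/negP => /eqP/(congr1 (@complex.Re R)); rewrite /= oppr0 !mulr0 subr0.
by apply/eqP; rewrite gt_eqF // mulr_gt0 // expR_gt0.
Qed.

End Gaussian.

Section RhoInjective.
Variable R : realType.

Definition sqr_modulus (w : R[i]) : R := complex.Re w ^+ 2 + complex.Im w ^+ 2.

Lemma sqr_modulus_cisM (a : R) (w : R[i]) : sqr_modulus (cis a * w) = sqr_modulus w.
Proof. by case: w => u v; rewrite /sqr_modulus /= -[RHS]mul1r -(cos2Dsin2 a); ring. Qed.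

Lemma sqr_modulus_gt0 (w : R[i]) : w != 0 -> 0 < sqr_modulus w.
Proof.
case: w => u v w0; rewrite /sqr_modulus /=.
have sqr_gt0 (r : R) : r != 0 -> 0 < r ^+ 2.
  by move=> r0; rewrite lt_neqAle sqr_ge0 andbT eq_sym sqrf_eq0.
have [u0|u0] := eqVneq u 0.
  have v0 : v != 0 by apply: contraNneq w0 => v0; rewrite u0 v0.
  by have := sqr_gt0 v v0; rewrite u0 expr0n /=; lra.
by have := sqr_gt0 u u0; have := sqr_ge0 v; lra.
Qed.

Lemma Schwartz_sqr_modulus_decay n (G : 'cV[R]_n -> R[i]) : Schwartz G ->
  exists M, forall x, (1 + `|x|) * sqr_modulus (G x) <= M.
Proof.
move=> [[_ bre] [_ bim]].
have [A1 HA1] := bre [::] 1%N; have [A0 HA0] := bre [::] 0%N.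
have [B1 HB1] := bim [::] 1%N; have [B0 HB0] := bim [::] 0%N.
exists (A1 * A0 + B1 * B0) => x.
have w0 : 0 <= 1 + `|x| by rewrite addr_ge0.
move: (HA1 x) (HA0 x) (HB1 x) (HB0 x); rewrite /= expr1 expr0 !mul1r.
set a := complex.Re (G x); set b := complex.Im (G x) => a1 a0 b1 b0.
rewrite /sqr_modulus -/a -/b -(real_normK (num_real a)) -(real_normK (num_real b)).
by rewrite mulrDr !expr2 !mulrA; apply: lerD; apply: ler_pM; rewrite ?mulr_ge0.
Qed.

Lemma decaying_periodic_eq0 (V : normedModType R) (N : V -> R) (M : R) (s0 dl : V) :
  (forall x, (1 + `|x|) * N x <= M) -> (forall s, N (s + dl) = N s) -> 0 < N s0 ->
  dl = 0.
Proof.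
move=> NM Nper N0; apply/eqP; apply: contraT => dl0.
have Nk k : N (s0 + dl *+ k) = N s0.
  elim: k => [|k IH]; first by rewrite mulr0n addr0.
  by rewrite mulrSr addrA Nper.
have dpos : 0 < `|dl| by rewrite normr_gt0.
have M0 : 0 <= M by apply: le_trans (NM s0); rewrite mulr_ge0 ?addr_ge0 // ltW.
pose X := (M / N s0 + `|s0|) / `|dl|.
have X0 : 0 <= X by rewrite divr_ge0 ?addr_ge0 ?divr_ge0 // ltW.
have := archi_boundP X0; set k := Num.Def.archi_bound X.
rewrite /X ltr_pdivrMr // => Xk.
have far : M / N s0 < `|s0 + dl *+ k|.
  have := ler_normB (s0 + dl *+ k) s0; rewrite addrC addKr normrMn -mulr_natl.
  by move/(lt_le_trans Xk); rewrite ltrD2r.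
rewrite ltr_pdivrMr // in far.
by have := NM (s0 + dl *+ k); rewrite Nk mulrDl mul1r; lra.
Qed.

Lemma derivable_neq0_line (V : normedModType R) (f : V -> R) (x v : V) :
  derivable f x v -> f x != 0 ->
  exists2 e : R, 0 < e & forall h : R, `|h| < e -> f (h *: v + x) != 0.
Proof.
move=> fx' fx0.
have fcont : {for 0, continuous (fun h : R => f (h *: v + x))}.
  exact/differentiable_continuous/derivable1_diffP/(derivable1P _ _ _).1.
have fx_gt0 : 0 < `|f x| by rewrite normr_gt0.
move/cvgr_dist_lt: fcont => /(_ _ fx_gt0).
rewrite scale0r add0r => /nbhs_ballP [e e0 He].
exists e => // h he; apply/negP => /eqP fh.
have := He h; rewrite -ball_normE /ball_ /= sub0r normrN => /(_ he).
by rewrite fh subr0 ltxx.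
Qed.

Lemma Schwartz_neq0_line n (G : 'cV[R]_n -> R[i]) (s0 : 'cV[R]_n) (i : 'I_n) :
  Schwartz G -> G s0 != 0 ->
  exists2 e : R, 0 < e & forall h : R, `|h| < e -> G (h *: unitv R i + s0) != 0.
Proof.
case=> [[dre _] [dim _]] Gs0.
have : (complex.Re (G s0) != 0) || (complex.Im (G s0) != 0).
  by apply: contraNT Gs0; rewrite negb_or !negbK; case: (G s0) => u v /= /andP[/eqP-> /eqP->].
case/orP=> [/(derivable_neq0_line (dre [::] i s0))|/(derivable_neq0_line (dim [::] i s0))];
  by case=> e e0 He; exists e => // h /He /=; apply: contra => /eqP ->.
Qed.

Section Rho.
Variables (n : nat) (G : 'cV[R]_n -> R[i]) (s0 : 'cV[R]_n).
Hypotheses (SG : Schwartz G) (Gs0 : G s0 != 0).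

Lemma rho_inj_shift (a a' b b' : 'cV[R]_n) :
  rho (col_mx a b) G = rho (col_mx a' b') G -> a = a'.
Proof.
move=> ab; apply/eqP; rewrite eq_sym -subr_eq0; apply/eqP.
have [M GM] := Schwartz_sqr_modulus_decay SG.
apply: (decaying_periodic_eq0 GM) (sqr_modulus_gt0 Gs0) => s.
have := congr1 (fun F => sqr_modulus (F (s + a'))) ab.
by rewrite /= !rho_col_mx !sqr_modulus_cisM addrK addrA.
Qed.

Lemma rho_inj_modulation (a b b' : 'cV[R]_n) :
  rho (col_mx a b) G = rho (col_mx a b') G -> b = b'.
Proof.
move=> ab; pose theta c t := 2 * pi * dotp c t - pi * dotp a c.
have phase t : G (t - a) != 0 -> cis (theta b t - theta b' t) = 1.
  by move=> Gt; apply: cisB_eq1; apply: (mulIf Gt); rewrite -!rho_col_mx ab.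
apply/matrixP => i j; rewrite (ord1 j); apply/eqP; rewrite -subr_eq0; apply/eqP.
have [e e0 He] := Schwartz_neq0_line i SG Gs0.
have : 2 * pi * (b i 0 - b' i 0) = 0.
  apply: (cis_eq1_near0 e0) => h /andP[h0 he].
  have P1 := phase (h *: unitv R i + s0 + a); rewrite addrK in P1.
  have P0 := phase (s0 + a); rewrite addrK in P0.
  have he' : `|h| < e by rewrite gtr0_norm.
  rewrite -(cisB_eq1 (etrans (P1 (He h he')) (esym (P0 Gs0)))); congr cis.
  by rewrite /theta !dotpDr !dotpZr !(dotpC _ (unitv R i)) !dotp_unitv; ring.
have pi2 : 2 * pi != 0 :> R by rewrite mulf_neq0 // gt_eqF // pi_gt0.
by move/eqP; rewrite mulf_eq0 (negbTE pi2) => /eqP.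
Qed.

Lemma rho_inj (p q : 'cV[R]_(n + n)) : rho p G = rho q G -> p = q.
Proof.
rewrite -[p]vsubmxK -[q]vsubmxK => pq.
have a_eq := rho_inj_shift pq; rewrite a_eq in pq *.
by rewrite (rho_inj_modulation pq).
Qed.

End Rho.

End RhoInjective.

Section Metaplectic.
Variables (R : realType) (d : nat) (A : 'M[R]_((d + d) + (d + d))).
Variable U : ('cV[R]_(d + d) -> R[i]) -> ('cV[R]_(d + d) -> R[i]).
Hypothesis UA : metaplectic A U.

Lemma metaplectic_tens_tfshift (f g : 'cV[R]_d -> R[i]) z :
  Schwartz f -> Schwartz g ->
  U (tens (tfshift z f) (tfshift z g)) = rho (A *m tens_point z) (U (tens f g)).
Proof.
by case: UA => _ _ _ _ Urho Sf Sg; rewrite tens_tfshift Urho //; apply: Schwartz_tens.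
Qed.

Lemma metaplectic_neq0 (F : 'cV[R]_(d + d) -> R[i]) t0 :
  Schwartz F -> F t0 != 0 -> exists t, U F t != 0.
Proof.
case: UA => Ulin _ Uinj _ _ SF Ft0.
have S0 : Schwartz (fun _ : 'cV[R]_(d + d) => 0 : R[i]) by split; exact: schwartz_real0.
have U0 : U (fun _ => 0) = (fun _ => 0).
  have := Ulin _ _ 0 0 S0 S0; rewrite mul0r addr0 => ->.
  by apply: funext => t; rewrite !mul0r addr0.
apply: contrapT => UF0; move: Ft0; apply/negP/negPn/eqP.
have : U F = U (fun _ => 0).
  by rewrite U0; apply: funext => t; apply/eqP/negPn/negP => UFt; apply: UF0; exists t.
by move/(Uinj _ _ SF S0) ->.
Qed.

End Metaplectic.

Theorem mainTheorem4 (R : realType) (d : nat)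
    (A : 'M[R]_((d + d) + (d + d)))
    (U : ('cV[R]_(d + d) -> R[i]) -> ('cV[R]_(d + d) -> R[i])) :
  symplectic A -> metaplectic A U ->
  ((forall (f g : 'cV[R]_d -> R[i]), Schwartz f -> Schwartz g ->
      forall z : 'cV[R]_(d + d),
        U (tens (tfshift z f) (tfshift z g)) = Tr z (U (tens f g)))
   <->
   exists A11 A13 A21 : 'M[R]_d,
     [/\ A13^T = A13, A21^T = A21 & A = covariant_form A11 A13 A21]).
Proof.
move=> SA UA; apply: iff_trans (covariant_formP SA); split=> [cov z | fixA f g Sf Sg z].
- have Sgauss := @Schwartz_gaussC R d.
  have SF := Schwartz_tens Sgauss Sgauss.
  have [t UFt] := metaplectic_neq0 UA SF (tens_gaussC_neq0 0).
  have [_ USch _ _ _] := UA.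
  apply: (rho_inj (USch _ SF) UFt).
  by rewrite -(metaplectic_tens_tfshift UA) // cov // Tr_rho.
- by rewrite (metaplectic_tens_tfshift UA) // fixA Tr_rho.
Qed.
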